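(* Let $K$ be a field of characteristic zero, $n\ge2$, and let $u=1+\sum_{i=1}^na_i\in(1+\mathfrak{a}_{n,n-1})^*$ with $a_i\in\mathfrak{p}_{Ci}$. Then \begin{enumerate} \item for all $i$, $1+a_i$, viewed as a linear map $P_n\to P_n$, has finite-dimensional kernel and cokernel, and $\sum_{i=1}^n{\rm ind}(1+a_i)=0$; \item if also $u=1+\sum_{i=1}^na_i'$ with $a_i'\in\mathfrak{p}_{Ci}$, then ${\rm ind}(1+a_i)={\rm ind}(1+a_i')$ for all $i$. \end{enumerate}
   Context: $\mathbb{S}_n$ is the $K$-algebra generated by $x_1,\dots,x_n,y_1,\dots,y_n$ with defining relations $y_ix_i=1$ and $[x_i,y_j]=[x_i,x_j]=[y_i,y_j]=0$ for $i\ne j$; it acts faithfully on $P_n=K[x_1,\dots,x_n]$ by $x_i*x^\alpha=x^{\alpha+e_i}$, $y_i*x^\alpha=x^{\alpha-e_i}$ if $\alpha_i>0$ and $0$ otherwise, so $\mathbb{S}_n\subseteq{\rm End}_K(P_n)$. $\mathfrak{p}_i$ is the ideal generated by all $x_i^ky_i^l-x_i^{k+1}y_i^{l+1}$ ($k,l\in\mathbb{N}$); $\mathfrak{p}_I=\bigcap_{i\in I}\mathfrak{p}_i$, $\mathfrak{p}_{Ci}=\bigcap_{j\ne i}\mathfrak{p}_j$; $\mathfrak{a}_{n,n-1}=\sum_{|I|=n-1}\mathfrak{p}_I=\sum_i\mathfrak{p}_{Ci}$. $(1+\mathfrak b)^*$ is the group of units of $\mathbb{S}_n$ of the form $1+b$,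 $b\in\mathfrak b$. For a linear map $\varphi$ with finite-dimensional kernel and cokernel, ${\rm ind}(\varphi)=\dim\ker\varphi-\dim{\rm coker}\,\varphi$. *)

From HB Require Import structures.
From mathcomp Require Import all_boot all_order all_algebra.
From mathcomp Require Import mpoly.
From Stdlib Require Import ClassicalEpsilon.

Set Implicit Arguments.
Unset Strict Implicit.
Unset Printing Implicit Defensive.

Import GRing.Theory.
Local Open Scope ring_scope.

(* Elements of S_n are represented through their (faithful) action on P_n,
   i.e. as maps P_n -> P_n; S_n is the subalgebra of End_K(P_n) generated
   by the operators x_i and y_i below.                                     *)

Section Jacobian.
Variables (K : fieldType) (n : nat).

Definition Pn := {mpoly K[n]}.
Definition op := Pn -> Pn.

Definition opx (i : 'I_n) : op := fun p => 'X_i * p.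

Definition opy (i : 'I_n) : op := fun p =>
  \sum_(m <- msupp p)
     p@_m *: (if (0 < m i)%N then 'X_[mnm_sub m (mnm1 i)] else 0).

Definition op1 : op := fun p => p.
Definition op0 : op := fun _ => 0.
Definition opadd (f g : op) : op := fun p => f p + g p.
Definition opopp (f : op) : op := fun p => - f p.
Definition opscale (c : K) (f : op) : op := fun p => c *: f p.
Definition opmul (f g : op) : op := fun p => f (g p).
Definition opexp (f : op) (k : nat) : op := iter k (opmul f) op1.

Inductive inS : op -> Prop :=
  | inS_x i : inS (opx i)
  | inS_y i : inS (opy i)
  | inS_1 : inS op1
  | inS_add f g : inS f -> inS g -> inS (opadd f g)
  | inS_scale c f : inS f -> inS (opscale c f)
  | inS_mul f g : inS f -> inS g -> inS (opmul f g).

Definition pgen (i : 'I_n) (k l : nat) : op :=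
  opadd (opmul (opexp (opx i) k) (opexp (opy i) l))
        (opopp (opmul (opexp (opx i) k.+1) (opexp (opy i) l.+1))).

Inductive inp (i : 'I_n) : op -> Prop :=
  | inp_gen k l : inp i (pgen i k l)
  | inp_0 : inp i op0
  | inp_add a b : inp i a -> inp i b -> inp i (opadd a b)
  | inp_lmul s a : inS s -> inp i a -> inp i (opmul s a)
  | inp_rmul a s : inS s -> inp i a -> inp i (opmul a s).

Definition inpC (i : 'I_n) (a : op) : Prop := forall j : 'I_n, j != i -> inp j a.

Definition unitS (u : op) : Prop :=
  inS u /\ exists v, inS v /\ (forall p, u (v p) = p) /\ (forall p, v (u p) = p).

Definition one_plus_sum (a : 'I_n -> op) : op :=
  fun p => p + \sum_(i < n) a i p.

Definition lincomb (B : seq Pn) (c : nat -> K) : Pn :=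
  \sum_(j < size B) c j *: B`_j.

Definition fd_ker (f : op) : Prop :=
  exists B : seq Pn, (forall b, b \in B -> f b = 0) /\
    (forall p, f p = 0 -> exists c, p = lincomb B c).

Definition fd_coker (f : op) : Prop :=
  exists C : seq Pn, forall p, exists q c, p = f q + lincomb C c.

Definition ker_basis (f : op) (B : seq Pn) : Prop :=
  (forall b, b \in B -> f b = 0) /\
  (forall p, f p = 0 -> exists c, p = lincomb B c) /\
  (forall c, lincomb B c = 0 -> forall j, (j < size B)%N -> c j = 0).

Definition coker_basis (f : op) (C : seq Pn) : Prop :=
  (forall p, exists q c, p = f q + lincomb C c) /\
  (forall c, (exists q, lincomb C c = f q) -> forall j, (j < size C)%N -> c j = 0).

Definition dim_ker (f : op) : nat :=
  epsilon (inhabits 0%N) (fun d => exists B, size B = d /\ ker_basis f B).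

Definition dim_coker (f : op) : nat :=
  epsilon (inhabits 0%N) (fun d => exists C, size C = d /\ coker_basis f C).

Definition ind (f : op) : int := (dim_ker f)%:Z - (dim_coker f)%:Z.

End Jacobian.

From HB Require Import structures.
From mathcomp Require Import all_boot all_order all_algebra.
From mathcomp Require Import mpoly ring zify.
From Stdlib Require Import ClassicalEpsilon Classical.
Import GRing.Theory.
Local Open Scope ring_scope.
Set Implicit Arguments.
Unset Strict Implicit.
Unset Printing Implicit Defensive.

(* Since a_i lies in p_j for every j <> i, there is an N such that a_i only
   reads and only produces monomials of x_j-degree below N; that is, a_i factors
   through the projection onto the slab {m | m_j < N for all j <> i}. Two
   distinct slabs meet in the finite box {m | m_j < N for all j}, so a_i a_k has
   finite rank whenever i <> k. Hence every 1 + a_i is Fredholm, and the product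
   (1 + a_1) ... (1 + a_n) differs from the unit u = 1 + a_1 + ... + a_n by a map
   of finite rank. The index is additive on products and invariant under
   finite-rank perturbations, so the indices of the 1 + a_i add up to ind u = 0.
   If also u = 1 + a'_1 + ... + a'_n, then a_i - a'_i = sum_{k <> i} (a'_k - a_k)
   takes values in the box, so 1 + a_i and 1 + a'_i have the same index. *)

(** * Relative dimension *)

(* Subspaces are Prop-valued predicates, since kernels and images of maps on
   an infinite-dimensional space are not decidable. [dim_mod A B d] says that
   for subspaces [A <= B] the quotient [B / A] has dimension [d]. *)

Section RelativeDimension.
Variables (K : fieldType) (V : lmodType K).
Implicit Types (A B C : V -> Prop) (L D : seq V) (c : nat -> K).

Definition lcomb L c : V := \sum_(j < size L) c j *: L`_j.

Definition subspace A := A 0 /\ forall k x y, A x -> A y -> A (k *: x + y).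
Definition subS A B := forall x, A x -> B x.

Definition span_mod A B L := forall b, B b -> exists a c, A a /\ b = a + lcomb L c.
Definition free_mod A L :=
  forall c, A (lcomb L c) -> forall j, (j < size L)%N -> c j = 0.
Definition all_in B L := forall j, (j < size L)%N -> B L`_j.
Definition basis_mod A B L := [/\ all_in B L, span_mod A B L & free_mod A L].
Definition dim_mod A B d := exists L, size L = d /\ basis_mod A B L.

Lemma subspace0 A : subspace A -> A 0. Proof. by case. Qed.

Lemma subspaceD A x y : subspace A -> A x -> A y -> A (x + y).
Proof. by case=> _ sA Ax Ay; have := sA 1 x y Ax Ay; rewrite scale1r. Qed.

Lemma subspaceZ A k x : subspace A -> A x -> A (k *: x).
Proof. by case=> A0 sA Ax; have := sA k x 0 Ax A0; rewrite addr0. Qed.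

Lemma subspaceB A x y : subspace A -> A x -> A y -> A (x - y).
Proof.
by move=> sA Ax Ay; apply: subspaceD => //; rewrite -scaleN1r; apply: subspaceZ.
Qed.

Lemma subspace_sum A (I : Type) (r : seq I) (P : pred I) (F : I -> V) :
  subspace A -> (forall i, P i -> A (F i)) -> A (\sum_(i <- r | P i) F i).
Proof.
move=> sA AF; apply: (big_ind A) => //; first exact: subspace0.
by move=> x y; apply: subspaceD.
Qed.

Lemma lcomb_nil c : lcomb [::] c = 0. Proof. by rewrite /lcomb big_ord0. Qed.

Lemma lcomb_rcons L x c : lcomb (rcons L x) c = lcomb L c + c (size L) *: x.
Proof.
rewrite /lcomb size_rcons big_ord_recr /= nth_rcons ltnn eqxx; congr (_ + _).
by apply: eq_bigr => j _; rewrite nth_rcons ltn_ord.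
Qed.

Lemma lcomb_cat L1 L2 c :
  lcomb (L1 ++ L2) c = lcomb L1 c + lcomb L2 (fun j => c (size L1 + j)%N).
Proof.
rewrite /lcomb size_cat big_split_ord /=; congr (_ + _).
  by apply: eq_bigr => j _; rewrite nth_cat ltn_ord.
by apply: eq_bigr => j _; rewrite nth_cat ltnNge leq_addr /= addKn.
Qed.

Lemma eq_lcomb L c c' :
  (forall j, (j < size L)%N -> c j = c' j) -> lcomb L c = lcomb L c'.
Proof. by move=> eq_c; apply: eq_bigr => j _; rewrite eq_c. Qed.

Lemma lcomb_catE L1 L2 c1 c2 :
  lcomb L1 c1 + lcomb L2 c2 = lcomb (L1 ++ L2)
    (fun j => if (j < size L1)%N then c1 j else c2 (j - size L1)%N).
Proof.
rewrite lcomb_cat; congr (_ + _); first by apply: eq_lcomb => j ->.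
by apply: eq_lcomb => j _; rewrite ltnNge leq_addr /= addKn.
Qed.

Lemma lcombZ L c k : k *: lcomb L c = lcomb L (fun j => k * c j).
Proof. by rewrite /lcomb scaler_sumr; apply: eq_bigr => j _; rewrite scalerA. Qed.

Lemma lcomb0 L : lcomb L (fun _ => 0) = 0.
Proof. by rewrite /lcomb big1 // => j _; rewrite scale0r. Qed.

Lemma subspace_lcomb A L c : subspace A -> all_in A L -> A (lcomb L c).
Proof.
move=> sA AL; apply: subspace_sum => // -[j ltjL] _.
by apply: subspaceZ => //; apply: AL.
Qed.

Section LinearMap.
Variable f : V -> V.
Hypothesis lf : linear f.

Lemma lin0 : f 0 = 0.
Proof.
have := lf 1 0 0; rewrite !scale1r addr0.
by move/(congr1 (fun x => x - f 0)); rewrite subrr addrK => /esym.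
Qed.

Lemma linD x y : f (x + y) = f x + f y.
Proof. by have := lf 1 x y; rewrite !scale1r. Qed.

Lemma linZ k x : f (k *: x) = k *: f x.
Proof. by have := lf k x 0; rewrite !addr0 lin0 addr0. Qed.

Lemma linB x y : f (x - y) = f x - f y.
Proof. by rewrite linD -scaleN1r linZ scaleN1r. Qed.

Lemma lin_sum (I : Type) (r : seq I) (P : pred I) (F : I -> V) :
  f (\sum_(i <- r | P i) F i) = \sum_(i <- r | P i) f (F i).
Proof. exact: (big_morph f linD lin0). Qed.

Lemma lin_lcomb L c : f (lcomb L c) = lcomb (map f L) c.
Proof.
rewrite /lcomb lin_sum size_map; apply: eq_bigr => j _.
by rewrite linZ (nth_map 0) // ltn_ord.
Qed.

End LinearMap.

Lemma exists_row_kernel p q (M : 'M[K]_(p, q)) :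
  (q < p)%N -> exists2 w : 'rV_p, w *m M = 0 & w != 0.
Proof.
move=> lt_qp; have /rowV0Pn [w /sub_kermxP wM w_neq0] : kermx M != 0.
  rewrite kermx_eq0 /row_free; apply/negP => /eqP rkM.
  by have := rank_leq_col M; rewrite rkM leqNgt lt_qp.
by exists w.
Qed.

Lemma free_mod_size_le A B L D : subspace A -> span_mod A B L -> all_in B D ->
  free_mod A D -> (size D <= size L)%N.
Proof.
move=> sA spanL BD freeD; rewrite leqNgt; apply/negP => ltLD.
have [FG FGP] : exists FG : nat -> V * (nat -> K), forall j, (j < size D)%N ->
    A (FG j).1 /\ D`_j = (FG j).1 + lcomb L (FG j).2.
  apply: (choice (fun j ac => (j < size D)%N -> A ac.1 /\ D`_j = ac.1 + lcomb L ac.2)).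
  move=> j; case: (ltnP j (size D)) => [/BD/spanL [a [c ac]] | leDj].
    by exists (a, c).
  by exists (0, fun=> 0).
pose M := \matrix_(j < size D, k < size L) (FG j).2 k.
have [w wM w_neq0] := exists_row_kernel M ltLD.
have D_gt0 : (0 < size D)%N by apply: leq_ltn_trans ltLD.
pose e j := w 0 (insubd (Ordinal D_gt0) j).
have eE (j : 'I_(size D)) : e j = w 0 j.
  by rewrite /e; congr (w 0 _); apply: val_inj; rewrite val_insubd ltn_ord.
have A_lcomb_e : A (lcomb D e).
  have -> : lcomb D e = \sum_(j < size D) w 0 j *: (FG j).1
                        + \sum_(j < size D) w 0 j *: lcomb L (FG j).2.
    rewrite -big_split; apply: eq_bigr => j _ /=.
    by rewrite eE -scalerDr -(proj2 (FGP j (ltn_ord j))).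
  have -> : \sum_(j < size D) w 0 j *: lcomb L (FG j).2 = 0.
    rewrite /lcomb; under eq_bigr => j _ do rewrite scaler_sumr.
    rewrite exchange_big /= big1 // => k _.
    have : (w *m M) 0 k = 0 by rewrite wM mxE.
    rewrite mxE => wMk; rewrite -[RHS](scale0r L`_k) -wMk scaler_suml.
    by apply: eq_bigr => j _; rewrite scalerA /M !mxE.
  rewrite addr0; apply: subspace_sum => // j _.
  by apply: subspaceZ => //; case: (FGP j (ltn_ord j)).
move/negP: w_neq0; apply; apply/eqP/rowP => j.
by rewrite mxE -eE; apply: freeD.
Qed.

Lemma dim_mod_uniq A B d d' : subspace A -> dim_mod A B d -> dim_mod A B d' -> d = d'.
Proof.
move=> sA [L [<- [BL spanL freeL]]] [L' [<- [BL' spanL' freeL']]].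
apply/eqP; rewrite eqn_leq (free_mod_size_le sA spanL' BL freeL).
exact: (free_mod_size_le sA spanL BL' freeL').
Qed.

Lemma free_mod_rcons A L b : subspace A -> free_mod A L ->
  ~ (exists a c, A a /\ b = a + lcomb L c) -> free_mod A (rcons L b).
Proof.
move=> sA freeL b_nspan c; rewrite lcomb_rcons => Ac.
have cb0 : c (size L) = 0.
  apply/eqP/negP => /negP cb_neq0; apply: b_nspan.
  exists ((c (size L))^-1 *: (lcomb L c + c (size L) *: b)).
  exists (fun j => - (c (size L))^-1 * c j); split; first exact: subspaceZ.
  by rewrite -lcombZ scalerDr scalerA mulVf // scale1r scaleNr addrAC subrr add0r.
move: Ac; rewrite cb0 scale0r addr0 => Ac j; rewrite size_rcons ltnS leq_eqVlt.
by case/orP => [/eqP -> | ltjL] //; apply: freeL.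
Qed.

Lemma free_mod_extend A B D : subspace A -> all_in B D -> free_mod A D ->
  ~ span_mod A B D ->
  exists D', [/\ all_in B D', free_mod A D' & size D' = (size D).+1].
Proof.
move=> sA BD freeD nspanD.
have [b [Bb b_nspan]] : exists b, B b /\ ~ (exists a c, A a /\ b = a + lcomb D c).
  apply: NNPP => none; apply: nspanD => b Bb.
  by apply: NNPP => b_nspan; apply: none; exists b.
exists (rcons D b); split; last by rewrite size_rcons.
- move=> j; rewrite size_rcons ltnS leq_eqVlt nth_rcons.
  by case/orP => [/eqP -> | ltjD]; [rewrite ltnn eqxx | rewrite ltjD; apply: BD].
- exact: free_mod_rcons.
Qed.

Lemma dim_mod_exists A B L : subspace A -> span_mod A B L -> exists d, dim_mod A B d.
Proof.
move=> sA spanL.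
suff ext t D : all_in B D -> free_mod A D -> (size L - size D)%N = t ->
    exists d, dim_mod A B d.
  by apply: (ext _ [::]) => // [j | c _ j].
elim: t D => [|t IH] D BD freeD sizeD;
  (have [spanD | nspanD] := classic (span_mod A B D); first by exists (size D), D);
  have [D' [BD' freeD' szD']] := free_mod_extend sA BD freeD nspanD.
  have := free_mod_size_le sA spanL BD' freeD'.
  by rewrite szD' ltnNge -subn_eq0 sizeD.
by apply: (IH D') => //; rewrite szD' subnS sizeD.
Qed.

Lemma span_mod_weak A A' B B' L : subS A A' -> subS B' B ->
  span_mod A B L -> span_mod A' B' L.
Proof.
move=> AA' B'B spanL b /B'B /spanL [a [c [Aa ->]]].
by exists a, c; split => //; apply: AA'.
Qed.

Lemma dim_mod_ext A A' B B' d : (forall x, A x <-> A' x) ->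
  (forall x, B x <-> B' x) -> dim_mod A B d -> dim_mod A' B' d.
Proof.
move=> AA' BB' [L [sizeL [BL spanL freeL]]]; exists L; split => //; split.
- by move=> j ltjL; apply/BB'/BL.
- by apply: span_mod_weak spanL => x; [move/AA' | move/BB'].
- by move=> c /AA'; apply: freeL.
Qed.

Lemma dim_modD A B C d1 d2 : subspace A -> subspace B -> subS A B -> subS B C ->
  dim_mod A B d1 -> dim_mod B C d2 -> dim_mod A C (d1 + d2)%N.
Proof.
move=> sA sB AB BC [L1 [<- [BL1 span1 free1]]] [L2 [<- [CL2 span2 free2]]].
exists (L1 ++ L2); split; first by rewrite size_cat.
split.
- move=> j; rewrite size_cat nth_cat; case: (ltnP j (size L1)) => [ltj1 _ | lej1 ltj].
    exact/BC/BL1.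
  by apply: CL2; rewrite -(ltn_add2l (size L1)) subnKC.
- move=> x /span2 [b [c2 [/span1 [a [c1 [Aa ->]]] ->]]].
  by exists a, (fun j => if (j < size L1)%N then c1 j else c2 (j - size L1)%N);
    rewrite -lcomb_catE addrA.
- move=> c; rewrite lcomb_cat => Ac.
  have c2_0 : forall j, (j < size L2)%N -> c (size L1 + j)%N = 0.
    apply: free2; rewrite -[lcomb L2 _](addKr (lcomb L1 c)) addrC.
    by apply: (subspaceB sB); [exact: AB | exact: subspace_lcomb].
  move: Ac; rewrite (eq_lcomb c2_0) lcomb0 addr0 => Ac j; rewrite size_cat => ltj.
  case: (ltnP j (size L1)) => [ltj1 | lej1]; first exact: free1.
  by rewrite -(subnKC lej1); apply: c2_0; rewrite -(ltn_add2l (size L1)) subnKC.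
Qed.

Lemma dim_mod_split A B C d : subspace A -> subspace B -> subS A B -> subS B C ->
  dim_mod A C d ->
  exists d1 d2, [/\ dim_mod A B d1, dim_mod B C d2 & d = (d1 + d2)%N].
Proof.
move=> sA sB AB BC dC; have [L [_ [_ spanL _]]] := dC.
have [d1 dB] := dim_mod_exists sA (span_mod_weak (fun x Ax => Ax) BC spanL).
have [d2 dC'] := dim_mod_exists sB (span_mod_weak AB (fun x Cx => Cx) spanL).
exists d1, d2; split => //.
exact: dim_mod_uniq sA dC (dim_modD sA sB AB BC dB dC').
Qed.

Definition zeroS (x : V) := x = 0.
Definition fullS (x : V) := True.
Definition kerS (f : V -> V) x := f x = 0.
Definition imageS (f : V -> V) A y := exists x, A x /\ y = f x.
Definition capS A B x := A x /\ B x.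
Definition addS A B x := exists a b, [/\ A a, B b & x = a + b].

Lemma subspace_zeroS : subspace zeroS.
Proof. by split => // k x y -> ->; rewrite scaler0 addr0. Qed.

Lemma subspace_fullS : subspace fullS. Proof. by []. Qed.

Lemma subspace_kerS f : linear f -> subspace (kerS f).
Proof.
move=> lf; split; first exact: lin0.
by move=> k x y; rewrite /kerS lf => -> ->; rewrite scaler0 addr0.
Qed.

Lemma subspace_imageS f A : linear f -> subspace A -> subspace (imageS f A).
Proof.
move=> lf sA; split; first by exists 0; rewrite lin0 //; split => //; apply: subspace0.
move=> k _ _ [x [Ax ->]] [y [Ay ->]].
by exists (k *: x + y); rewrite lf; split => //; case: sA => _; apply.
Qed.

Lemma subspace_capS A B : subspace A -> subspace B -> subspace (capS A B).
Proof.
move=> [A0 sA] [B0 sB]; split => // k x y [Ax Bx] [Ay By].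
by split; [apply: sA | apply: sB].
Qed.

Lemma subspace_addS A B : subspace A -> subspace B -> subspace (addS A B).
Proof.
move=> [A0 sA] [B0 sB]; split; first by exists 0, 0; rewrite addr0.
move=> k _ _ [a [b [Aa Bb ->]]] [a' [b' [Aa' Bb' ->]]].
exists (k *: a + a'), (k *: b + b'); split; [exact: sA | exact: sB |].
by rewrite scalerDr addrACA.
Qed.

Lemma dim_mod_addS Z B d : subspace Z -> subspace B ->
  dim_mod (capS B Z) B d -> dim_mod Z (addS Z B) d.
Proof.
move=> sZ sB [L [<- [BL spanL freeL]]]; exists L; split => //; split.
- by move=> j ltjL; exists 0, L`_j; rewrite add0r; split => //; [apply: subspace0 | apply: BL].
- move=> _ [z [b [Zz /spanL [a [c [[Ba Za] ->]]] ->]]].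
  by exists (z + a), c; rewrite addrA; split => //; apply: subspaceD.
- by move=> c Zc; apply: freeL; split => //; apply: subspace_lcomb.
Qed.

Section Image.
Variables (f : V -> V) (A B : V -> Prop).
Hypotheses (lf : linear f) (sA : subspace A) (sB : subspace B) (AB : subS A B).
Hypothesis kerB_A : forall b, B b -> f b = 0 -> A b.

Lemma dim_mod_image d : dim_mod A B d -> dim_mod (imageS f A) (imageS f B) d.
Proof.
move=> [L [<- [BL spanL freeL]]]; exists (map f L); split; first by rewrite size_map.
split.
- move=> j; rewrite size_map => ltjL; rewrite (nth_map 0) //.
  by exists L`_j; split => //; apply: BL.
- move=> _ [b [/spanL [a [c [Aa ->]]] ->]].
  by exists (f a), c; rewrite linD // lin_lcomb //; split => //; exists a.
- move=> c [a [Aa]]; rewrite size_map -lin_lcomb // => fLa.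
  apply: freeL; rewrite -[lcomb L c](subrK a); apply: subspaceD => //.
  apply: kerB_A; last by rewrite linB // fLa subrr.
  by apply: subspaceB => //; [apply: subspace_lcomb | apply: AB].
Qed.

Lemma dim_mod_preimage d : dim_mod (imageS f A) (imageS f B) d -> dim_mod A B d.
Proof.
move=> [M [<- [fBM spanM freeM]]].
have [F FP] : exists F : V -> V, forall y, imageS f B y -> B (F y) /\ y = f (F y).
  apply: (choice (fun y x => imageS f B y -> B x /\ y = f x)) => y.
  have [[x [Bx ->]] | nfBy] := classic (imageS f B y); first by exists x.
  by exists 0.
have fFM : map f (map F M) = M.
  rewrite -map_comp -[RHS]map_id; apply/eq_in_map => y /(nthP 0) [j ltjM <-].
  by rewrite /= -(proj2 (FP _ (fBM j ltjM))).
have BFM : all_in B (map F M).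
  move=> j; rewrite size_map => ltjM; rewrite (nth_map 0) //.
  exact: (proj1 (FP _ (fBM j ltjM))).
have spanFM : span_mod A B (map F M).
  move=> b Bb; have [_ [c [[a [Aa ->]] fbE]]] := spanM (f b) (ex_intro _ b (conj Bb erefl)).
  exists (b - lcomb (map F M) c), c; split; last by rewrite subrK.
  have -> : b - lcomb (map F M) c = (b - a - lcomb (map F M) c) + a.
    by rewrite addrAC subrK.
  apply: subspaceD => //; apply: kerB_A.
    by apply: (subspaceB sB); [apply: (subspaceB sB) => //; apply: AB | apply: subspace_lcomb].
  by rewrite !linB // lin_lcomb // fFM fbE [f a + _]addrC addrK subrr.
have [d' dAB] := dim_mod_exists sA spanFM.
have := dim_mod_image dAB; move/(dim_mod_uniq (subspace_imageS lf sA)).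
by move=> /(_ (size M)) <- //; exists M.
Qed.

End Image.

End RelativeDimension.

Arguments zeroS {K V} x.
Arguments fullS {K V} x.
Arguments subspace_zeroS {K V}.
Arguments subspace_fullS {K V}.

(** * Fredholm maps *)

Section Fredholm.
Variables (K : fieldType) (V : lmodType K).
Implicit Types (f g : V -> V) (Z : V -> Prop).

Definition fredholm f k c :=
  dim_mod zeroS (kerS f) k /\ dim_mod (imageS f fullS) fullS c.

Lemma fredholm_restrict f Z w k c : linear f -> subspace Z -> dim_mod Z fullS w ->
  fredholm f k c ->
  exists k' c', [/\ dim_mod zeroS (capS (kerS f) Z) k', dim_mod (imageS f Z) fullS c'
    & k%:Z - c%:Z = k'%:Z - c'%:Z + w%:Z].
Proof.
move=> lf sZ dZ [dk dc]; have sK := subspace_kerS lf.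
have [k' [r [dk' dr ->]]] : exists k' r, [/\ dim_mod zeroS (capS (kerS f) Z) k',
    dim_mod (capS (kerS f) Z) (kerS f) r & k = (k' + r)%N].
  apply: dim_mod_split dk; [exact: subspace_zeroS | exact: subspace_capS | | by move=> x []].
  by move=> x ->; split; [exact: lin0 | exact: subspace0].
have [r' [s [dr' ds ->]]] : exists r' s, [/\ dim_mod Z (addS Z (kerS f)) r',
    dim_mod (addS Z (kerS f)) fullS s & w = (r' + s)%N].
  apply: dim_mod_split dZ => //; first exact: subspace_addS.
  by move=> x Zx; exists x, 0; rewrite addr0; split => //; apply: lin0.
have <- : r = r' by apply: dim_mod_uniq sZ (dim_mod_addS sZ sK dr) dr'.
have dfZ : dim_mod (imageS f Z) (imageS f fullS) s.
  have kerB_A b : fullS b -> f b = 0 -> addS Z (kerS f) b.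
    by move=> _ fb0; exists 0, b; rewrite add0r; split => //; apply: subspace0.
  apply: (dim_mod_ext _ _ (dim_mod_image lf (subspace_addS sZ sK) subspace_fullS
    (fun _ _ => I) kerB_A ds)) => y; split => //.
  - by case=> _ [[z [b [Zz fb0 ->]]] ->]; exists z; rewrite linD // fb0 addr0.
  - by case=> z [Zz ->]; exists z; split => //; exists z, 0; rewrite addr0 /kerS lin0.
exists k', (s + c)%N; split => //.
  by apply: dim_modD dfZ dc; do ?[apply: subspace_imageS] => // _ [z [_ ->]]; exists z.
by rewrite !PoszD; ring.
Qed.

Lemma fredholm_comp f g kf cf kg cg : linear f -> linear g ->
  fredholm f kf cf -> fredholm g kg cg ->
  exists k c, fredholm (f \o g) k c /\
    k%:Z - c%:Z = (kf%:Z - cf%:Z) + (kg%:Z - cg%:Z).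
Proof.
move=> lf lg dfc [dkg dcg].
have lfg : linear (f \o g) by move=> k x y /=; rewrite lg lf.
have sKg := subspace_kerS lg.
have [k' [c' [dk' dc' ->]]] :=
  fredholm_restrict lf (subspace_imageS lg subspace_fullS) dcg dfc.
have dker : dim_mod (kerS g) (kerS (f \o g)) k'.
  apply: (dim_mod_preimage lg sKg (subspace_kerS lfg)) => //.
    by move=> x; rewrite /kerS /= => ->; apply: lin0.
  apply: (dim_mod_ext _ _ dk') => x; split.
  - by move=> ->; exists 0; rewrite /kerS (lin0 lg).
  - by case=> y [gy0 ->].
  - by case=> fx0 [y [_ xE]]; exists y; rewrite /kerS /= -xE.
  - by case=> y [fgy0 ->]; split => //; exists y.
exists (kg + k')%N, c'; split; last by rewrite PoszD; ring.
split.
  apply: (dim_modD subspace_zeroS sKg _ _ dkg dker); first by move=> x ->; apply: lin0.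
  by move=> x; rewrite /kerS /= => ->; apply: lin0.
apply: (dim_mod_ext _ _ dc') => y; split => //.
  by case=> z [[x [_ ->]] ->]; exists x.
by case=> x [_ ->]; exists (g x); split => //; exists x.
Qed.

Definition finite_rank f := exists L : seq V, forall x, exists c, f x = lcomb L c.

Lemma eq_finite_rank f g : f =1 g -> finite_rank f -> finite_rank g.
Proof. by move=> fg [L fL]; exists L => x; rewrite -fg. Qed.

Lemma finite_rankD f g : finite_rank f -> finite_rank g ->
  finite_rank (fun x => f x + g x).
Proof.
move=> [L1 fL1] [L2 gL2]; exists (L1 ++ L2) => x.
by have [[c1 ->] [c2 ->]] := (fL1 x, gL2 x); rewrite lcomb_catE; eexists.
Qed.

Lemma finite_rank_sum (I : Type) (r : seq I) (P : pred I) (F : I -> V -> V) :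
  (forall i, P i -> finite_rank (F i)) ->
  finite_rank (fun x => \sum_(i <- r | P i) F i x).
Proof.
move=> FP; elim: r => [|i r [L IH]].
  by exists [::] => x; exists (fun=> 0); rewrite big_nil lcomb_nil.
have [Fi | NFi] := boolP (P i); last by exists L => x; rewrite big_cons (negbTE NFi).
have [L' FL'] := finite_rankD (FP i Fi) (ex_intro _ L IH).
by exists L' => x; rewrite big_cons Fi.
Qed.

Lemma finite_rank_comp f g : linear f -> finite_rank g -> finite_rank (f \o g).
Proof.
move=> lf [L gL]; exists (map f L) => x /=.
by have [c ->] := gL x; exists c; rewrite lin_lcomb.
Qed.

Lemma finite_rank_compr f g : finite_rank f -> finite_rank (f \o g).
Proof. by move=> [L fL]; exists L => x; apply: fL. Qed.

Lemma fredholm_exists f h1 h2 : linear f -> finite_rank h1 -> finite_rank h2 ->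
  (forall v, f v = 0 -> v = h1 v) -> (forall p, exists q, p = f q + h2 p) ->
  exists k c, fredholm f k c.
Proof.
move=> lf [L1 h1L] [L2 h2L] kerf cokerf.
have [k dk] : exists k, dim_mod zeroS (kerS f) k.
  apply: (dim_mod_exists (L := L1) subspace_zeroS) => v /kerf ->.
  by have [c ->] := h1L v; exists 0, c; rewrite add0r.
have [c dc] : exists c, dim_mod (imageS f fullS) fullS c.
  apply: (dim_mod_exists (L := L2) (subspace_imageS lf subspace_fullS)) => p _.
  have [q pE] := cokerf p; have [c h2p] := h2L p.
  by exists (f q), c; rewrite -h2p; split => //; exists q.
by exists k, c.
Qed.

Lemma finite_rank_kerS h : linear h -> finite_rank h -> exists w, dim_mod (kerS h) fullS w.
Proof.
move=> lh [L hL]; have [w dw] : exists w, dim_mod zeroS (imageS h fullS) w.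
  apply: (dim_mod_exists (L := L) subspace_zeroS) => _ [p [_ ->]].
  by have [c hp] := hL p; exists 0, c; rewrite add0r.
exists w; apply: (dim_mod_preimage lh (subspace_kerS lh) subspace_fullS) => //.
apply: (dim_mod_ext _ _ dw) => x; split => //.
- by move=> ->; exists 0; rewrite /kerS (lin0 lh).
- by case=> y [hy0 ->].
Qed.

Lemma fredholm_perturb f g kf cf kg cg : linear f -> linear g ->
  finite_rank (fun x => f x - g x) ->
  fredholm f kf cf -> fredholm g kg cg -> kf%:Z - cf%:Z = kg%:Z - cg%:Z.
Proof.
move=> lf lg fg_fin dfc dgc; pose h x := f x - g x.
have lh : linear h by move=> k x y; rewrite /h lf lg scalerBr opprD addrACA.
have sZ := subspace_kerS lh; have [w dZ] := finite_rank_kerS lh fg_fin.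
have [k1 [c1 [dk1 dc1 ->]]] := fredholm_restrict lf sZ dZ dfc.
have [k2 [c2 [dk2 dc2 ->]]] := fredholm_restrict lg sZ dZ dgc.
have fg x : kerS h x -> f x = g x by move/eqP; rewrite subr_eq0 => /eqP.
have -> : k1 = k2.
  apply: dim_mod_uniq subspace_zeroS dk1 _; apply: (dim_mod_ext _ _ dk2) => x //.
  by split=> -[gx0 hx0]; split => //; rewrite /kerS ?fg // -fg.
have -> // : c1 = c2.
apply: dim_mod_uniq (subspace_imageS lf sZ) dc1 _; apply: (dim_mod_ext _ _ dc2) => y //.
by split=> -[x [hx0 ->]]; exists x; rewrite fg.
Qed.

Lemma fredholm_bij f g : linear f -> cancel f g -> cancel g f -> fredholm f 0 0.
Proof.
move=> lf fK gK; split; exists [::]; split=> //; split=> //.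
  move=> x fx0; exists 0, (fun=> 0); split => //.
  by rewrite lcomb_nil addr0 -[x]fK fx0 -{1}(lin0 lf) fK.
move=> x _; exists x, (fun=> 0); rewrite lcomb_nil addr0.
by split => //; exists (g x); rewrite gK.
Qed.

End Fredholm.

(** * The operators of S_n on polynomials *)

Section Coefficients.
Variables (K : fieldType) (n : nat).
Local Notation P := (Pn K n).
Implicit Types (p q : P) (m : 'X_{1..n}) (S : pred 'X_{1..n}).

Lemma mcoeff_sum_msupp p (g : 'X_{1..n} -> option 'X_{1..n}) k :
  (\sum_(m <- msupp p) p@_m *: (if g m is Some m' then 'X_[m'] else 0))@_k
  = \sum_(m <- msupp p) p@_m * (g m == Some k)%:R.
Proof.
rewrite (big_morph _ (@mcoeffD _ _ k) (@mcoeff0 _ _ k)).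
by apply: eq_bigr => m _; rewrite mcoeffZ; case: (g m) => [m'|] /=;
  rewrite ?mcoeffX ?mcoeff0.
Qed.

Lemma sum_msupp_pick p m0 (Q : 'X_{1..n} -> bool) :
  (forall m, Q m = (m == m0)) -> \sum_(m <- msupp p) p@_m * (Q m)%:R = p@_m0.
Proof.
move=> QE; have [m0p | m0Np] := boolP (m0 \in msupp p).
  rewrite (bigD1_seq m0) //= ?msupp_uniq // QE eqxx mulr1 big1 ?addr0 //.
  by move=> m /negbTE m_neq; rewrite QE m_neq mulr0.
rewrite big1_seq; last first.
  move=> m /andP[_ mp]; rewrite QE; case: eqP => [m_eq|]; last by rewrite mulr0.
  by rewrite -m_eq mp in m0Np.
by move: m0Np; rewrite -mcoeff_eq0 => /eqP.
Qed.

Definition mproj S p : P :=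
  \sum_(m <- msupp p) p@_m *: (if S m then 'X_[m] else 0).

Lemma mcoeff_mproj S p m : (mproj S p)@_m = if S m then p@_m else 0.
Proof.
have -> : mproj S p = \sum_(m <- msupp p) p@_m *:
    (if (if S m then Some m else None) is Some m' then 'X_[m'] else 0).
  by apply: eq_bigr => m' _; case: (S m').
rewrite mcoeff_sum_msupp; case: (boolP (S m)) => Sm.
  apply: sum_msupp_pick => m'; case: (boolP (S m')) => Sm' /=.
    by rewrite (inj_eq (@Some_inj _)).
  by case: (m' =P m) => [m'E|//]; rewrite m'E Sm in Sm'.
rewrite big1 // => m' _; case: (boolP (S m')) => Sm' /=; last by rewrite mulr0.
by case: eqP => [[m'E]|]; [rewrite -m'E Sm' in Sm | rewrite mulr0].
Qed.

Lemma mcoeff_opy (i : 'I_n) p m : (opy i p)@_m = p@_(mnm_add m (mnm1 i)).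
Proof.
have -> : opy i p = \sum_(m0 <- msupp p) p@_m0 *:
   (if (if (0 < m0 i)%N then Some (mnm_sub m0 (mnm1 i)) else None) is Some m'
    then 'X_[m'] else 0).
  by apply: eq_bigr => m' _; case: (0 < m' i)%N.
rewrite mcoeff_sum_msupp; apply: sum_msupp_pick => m'.
case: (ltnP 0 (m' i)) => m'i /=.
  rewrite (inj_eq (@Some_inj _)); apply/eqP/eqP => [<-|->].
    by apply/mnmP => j; rewrite !mnmE; case: (i =P j) => [<-|_]; lia.
  by apply/mnmP => j; rewrite !mnmE addnK.
by apply/esym/eqP => m'E; move: m'i; rewrite m'E !mnmE eqxx addn1.
Qed.

Lemma mcoeff_opx (i : 'I_n) p m :
  (opx i p)@_m = if (0 < m i)%N then p@_(mnm_sub m (mnm1 i)) else 0.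
Proof.
rewrite /opx mulrC; case: ltnP => mi.
  have {1}-> : m = mnm_add (mnm1 i) (mnm_sub m (mnm1 i)).
    by apply/mnmP => j; rewrite !mnmE; case: (i =P j) => [<-|_]; lia.
  by rewrite mcoeffMX; congr (p@__); apply/mnmP => j; rewrite !mnmE addKn.
apply/eqP; rewrite mcoeff_eq0 (perm_mem (msuppMX _ _)); apply/mapP => -[m' _ mE].
by move: mi; rewrite mE !mnmE eqxx.
Qed.

Lemma mcoeff_opx_opy (j : 'I_n) q m :
  (opx j (opy j q))@_m = if (0 < m j)%N then q@_m else 0.
Proof.
rewrite mcoeff_opx mcoeff_opy; case: ifP => // mj; congr (q@__).
by apply/mnmP => i; rewrite !mnmE; case: (j =P i) => [<-|_] /=; lia.
Qed.

End Coefficients.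

Section Support.
Variables (K : fieldType) (n : nat).
Local Notation P := (Pn K n).
Implicit Types (p q : P) (m : 'X_{1..n}) (S T : pred 'X_{1..n}).

Definition supported S p := forall m, ~~ S m -> p@_m = 0.

Lemma linear_opx (i : 'I_n) : linear (opx (K:=K) i).
Proof. by move=> k x y; rewrite /opx mulrDr scalerAr. Qed.

Lemma linear_opy (i : 'I_n) : linear (opy (K:=K) i).
Proof. by move=> k x y; apply/mpolyP => m; rewrite !(mcoeff_opy, mcoeffD, mcoeffZ). Qed.

Lemma linear_mproj S : linear (mproj (K:=K) S).
Proof.
move=> k x y; apply/mpolyP => m; rewrite !(mcoeff_mproj, mcoeffD, mcoeffZ).
by case: (S m); rewrite ?mulr0 ?addr0.
Qed.

Lemma linear_opadd (f g : op K n) : linear f -> linear g -> linear (opadd f g).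
Proof. by move=> lf lg k x y; rewrite /opadd lf lg scalerDr addrACA. Qed.

Lemma linear_opmul (f g : op K n) : linear f -> linear g -> linear (opmul f g).
Proof. by move=> lf lg k x y; rewrite /opmul lg lf. Qed.

Lemma linear_inS (f : op K n) : inS f -> linear f.
Proof.
elim=> {f} [i|i||f g _ lf _ lg|c f _ lf|f g _ lf _ lg].
- exact: linear_opx.
- exact: linear_opy.
- by [].
- exact: linear_opadd.
- by move=> k x y; rewrite /opscale lf scalerDr !scalerA mulrC.
- exact: linear_opmul.
Qed.

Lemma mproj_id S p : supported S p -> mproj S p = p.
Proof.
by move=> Sp; apply/mpolyP => m; rewrite mcoeff_mproj; case: (boolP (S m)) => // /Sp ->.
Qed.

Lemma mprojK S T p : mproj S (mproj T p) = mproj [pred m | S m && T m] p.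
Proof. by apply/mpolyP => m; rewrite !mcoeff_mproj /=; case: (S m); case: (T m). Qed.

Lemma mproj_split S p : p = mproj S p + mproj (predC S) p.
Proof.
apply/mpolyP => m; rewrite mcoeffD !mcoeff_mproj /=.
by case: (S m); rewrite ?addr0 ?add0r.
Qed.

Lemma eq_mproj S T p : S =1 T -> mproj S p = mproj T p.
Proof. by move=> ST; apply/mpolyP => m; rewrite !mcoeff_mproj ST. Qed.

Lemma mproj_pred0 S p : S =1 pred0 -> mproj S p = 0.
Proof. by move=> S0; apply/mpolyP => m; rewrite mcoeff_mproj S0 mcoeff0. Qed.

Lemma sub_supported S T p : subpred S T -> supported S p -> supported T p.
Proof. by move=> ST Sp m Tm; apply: Sp; apply: contra Tm; apply: ST. Qed.

Lemma supportedD S p q : supported S p -> supported S q -> supported S (p + q).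
Proof. by move=> Sp Sq m Sm; rewrite mcoeffD Sp ?Sq ?addr0. Qed.

Lemma supportedZ S k p : supported S p -> supported S (k *: p).
Proof. by move=> Sp m Sm; rewrite mcoeffZ Sp ?mulr0. Qed.

Lemma supportedN S p : supported S p -> supported S (- p).
Proof. by move=> Sp m Sm; rewrite mcoeffN Sp ?oppr0. Qed.

End Support.

Section DegreeShift.
Variables (K : fieldType) (n : nat) (j : 'I_n).
Local Notation P := (Pn K n).
Implicit Types (f g : op K n) (p q : P).

Definition deg_raise_le d f := forall M p,
  supported (fun m => m j < M)%N p -> supported (fun m => m j < M + d)%N (f p).
Definition deg_lower_le d f := forall M p,
  supported (fun m => M + d <= m j)%N p -> supported (fun m => M <= m j)%N (f p).
Definition deg_shift_le d f := deg_raise_le d f /\ deg_lower_le d f.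

Lemma deg_shift_le_mono d d' f : (d <= d')%N -> deg_shift_le d f -> deg_shift_le d' f.
Proof.
move=> le_dd' [up dn]; split => M p Sp.
  apply: sub_supported (up M p Sp) => m /= lt_mj.
  by apply: leq_trans lt_mj _; rewrite leq_add2l.
by apply: dn; apply: sub_supported Sp => m /=; apply: leq_trans; rewrite leq_add2l.
Qed.

Lemma deg_shift_le_opmul d1 d2 f g :
  deg_shift_le d1 f -> deg_shift_le d2 g -> deg_shift_le (d2 + d1) (opmul f g).
Proof.
move=> [up1 dn1] [up2 dn2]; split => M p Sp; first by rewrite addnA; apply/up1/up2.
by apply/dn1/dn2; rewrite -addnA [(d1 + d2)%N]addnC.
Qed.

Lemma deg_shift_le_inS f : inS f -> exists d, deg_shift_le d f.
Proof.
have shift_max d1 d2 g1 g2 : deg_shift_le d1 g1 -> deg_shift_le d2 g2 ->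
    deg_shift_le (maxn d1 d2) g1 /\ deg_shift_le (maxn d1 d2) g2.
  by move=> s1 s2; split; [apply: deg_shift_le_mono s1 | apply: deg_shift_le_mono s2];
    rewrite ?leq_maxl ?leq_maxr.
elim=> {f} [i|i||f g _ [d1 s1] _ [d2 s2]|c f _ [d sf]|f g _ [d1 s1] _ [d2 s2]].
- exists 1%N; split => M p Sp m /= lt_mj; rewrite mcoeff_opx; case: ifP => // mi;
    apply: Sp; move: lt_mj mi; rewrite /= !mnmE; (case: (i =P j) => [E|NE] /=; [subst|]; lia).
- exists 1%N; split => M p Sp m /= lt_mj; rewrite mcoeff_opy; apply: Sp;
    move: lt_mj; rewrite /= !mnmE; (case: (i =P j) => [E|NE] /=; [subst|]; lia).
- by exists 0%N; split => M p; rewrite addn0.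
- have [[up1 dn1] [up2 dn2]] := shift_max _ _ _ _ s1 s2.
  by exists (maxn d1 d2); split => M p Sp; apply: supportedD;
    [apply: up1 | apply: up2 | apply: dn1 | apply: dn2].
- by exists d; case: sf => up dn; split => M p Sp; apply: supportedZ; [apply: up | apply: dn].
- by exists (d2 + d1)%N; apply: deg_shift_le_opmul.
Qed.

End DegreeShift.

Section Cutoff.
Variables (K : fieldType) (n : nat).
Local Notation P := (Pn K n).
Implicit Types (a f : op K n) (p q : P).

Definition cutoff (j : 'I_n) N a :=
  (forall p, supported (fun m => m j < N)%N (a p)) /\
  (forall p, supported (fun m => N <= m j)%N p -> a p = 0).

Lemma cutoff_mono j N N' a : (N <= N')%N -> cutoff j N a -> cutoff j N' a.
Proof.
move=> le_NN' [im_lt ker_ge]; split => p.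
  by apply: sub_supported (im_lt p) => m /= lt_mj; apply: leq_trans lt_mj le_NN'.
by move=> Sp; apply: ker_ge; apply: sub_supported Sp => m /=; apply: leq_trans.
Qed.

Lemma opexpSr f k p : opexp f k.+1 p = opexp f k (f p).
Proof. by elim: k p => [|k IH] p //; exact: (congr1 f (IH p)). Qed.

Lemma inS_opexp f k : inS f -> inS (opexp f k).
Proof. by move=> Sf; elim: k => [|k IH]; [exact: inS_1 | exact: inS_mul]. Qed.

Lemma linear_pgen (j : 'I_n) k l : linear (pgen (K:=K) j k l).
Proof.
have lin_xy k' l' : linear (opmul (opexp (opx (K:=K) j) k') (opexp (opy j) l')).
  by apply: linear_inS; apply: inS_mul; apply: inS_opexp; constructor.
apply: linear_opadd => // c x y; rewrite /opopp lin_xy.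
by rewrite scalerN opprD.
Qed.

Lemma linear_inp j a : inp j a -> linear a.
Proof.
elim=> {a} [k l||a b _ la _ lb|s a Ss _ la|a s Ss _ la].
- exact: linear_pgen.
- by move=> k x y; rewrite /op0 scaler0 addr0.
- exact: linear_opadd.
- exact: linear_opmul (linear_inS Ss) la.
- exact: linear_opmul la (linear_inS Ss).
Qed.

Lemma cutoff_pgen (j : 'I_n) k l : exists N, cutoff j N (pgen (K:=K) j k l).
Proof.
pose X := opexp (opx (K:=K) j) k; pose Y := opexp (opy (K:=K) j) l.
have lX : linear X by apply/linear_inS/inS_opexp; constructor.
have [dX [upX _]] := deg_shift_le_inS j (inS_opexp k (inS_x K j)).
have [dY [_ dnY]] := deg_shift_le_inS j (inS_opexp l (inS_y K j)).
(* [pgen j k l = x_j^k (1 - x_j y_j) y_j^l], and [1 - x_j y_j] keeps exactly the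
   monomials free of x_j. *)
have pgenE p : pgen j k l p = X (Y p - opx j (opy j (Y p))).
  by rewrite /pgen /opadd /opopp /opmul opexpSr linB.
have coef_xy q m : (q - opx j (opy j q))@_m = if (0 < m j)%N then 0 else q@_m.
  by rewrite mcoeffB mcoeff_opx_opy; case: ifP; rewrite ?subrr ?subr0.
exists (dX + dY).+1; split => p.
  rewrite pgenE; apply: (@sub_supported _ _ (fun m => m j < 1 + dX)%N).
    by move=> m /= lt_mj; apply: leq_trans lt_mj _; rewrite add1n ltnS leq_addr.
  by apply: upX => m; rewrite /= -leqNgt coef_xy => ->.
move=> Sp; have SYp : supported (fun m => 1 <= m j)%N (Y p).
  apply: dnY; apply: sub_supported Sp => m /=; apply: leq_trans.
  by rewrite add1n ltnS leq_addl.
rewrite pgenE -(lin0 lX); congr X; apply/mpolyP => m.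
by rewrite coef_xy mcoeff0; case: ifP => // mj; apply: SYp; rewrite /= mj.
Qed.

Lemma inp_cutoff j a : inp j a -> exists N, cutoff j N a.
Proof.
elim=> {a} [k l||a b _ [N1 ca] _ [N2 cb]
            |s a Ss _ [N [im_lt ker_ge]]|a s Ss _ [N [im_lt ker_ge]]].
- exact: cutoff_pgen.
- by exists 0%N; split => p // m; rewrite /op0 mcoeff0.
- have [im_a ker_a] := cutoff_mono (leq_maxl N1 N2) ca.
  have [im_b ker_b] := cutoff_mono (leq_maxr N1 N2) cb.
  exists (maxn N1 N2); split => p; first by apply: supportedD.
  by move=> Sp; rewrite /opadd ker_a // ker_b // addr0.
- have [d [up _]] := deg_shift_le_inS j Ss.
  exists (N + d)%N; split => p; first exact/up/im_lt.
  move=> Sp; rewrite /opmul ker_ge; first exact: lin0 (linear_inS Ss).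
  by apply: sub_supported Sp => m /=; apply: leq_trans; rewrite leq_addr.
- have [d [_ dn]] := deg_shift_le_inS j Ss.
  exists (N + d)%N; split => p.
    apply: sub_supported (im_lt _) => m /= lt_mj.
    by apply: leq_trans lt_mj _; rewrite leq_addr.
  by move=> Sp; rewrite /opmul ker_ge //; apply: dn.
Qed.

End Cutoff.

(** * The maps 1 + a_i *)

Section Index.
Variables (K : fieldType) (n : nat).
Implicit Types (f : op K n) (k c : nat).

Lemma ker_basisP f B : ker_basis f B <-> basis_mod zeroS (kerS f) B.
Proof.
split=> [[fB [spanB freeB]] | [fB spanB freeB]].
  split => //; first by move=> j ltjB; apply/fB/mem_nth.
  by move=> p /spanB [c ->]; exists 0, c; rewrite add0r.
split; first by move=> b /(nthP 0) [j ltjB <-]; apply: fB.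
by split => // p /spanB [_ [c [-> ->]]]; exists c; rewrite add0r.
Qed.

Lemma coker_basisP f C : coker_basis f C <-> basis_mod (imageS f fullS) fullS C.
Proof.
split=> [[spanC freeC] | [_ spanC freeC]]; split => //.
- by move=> p _; have [q [c ->]] := spanC p; exists (f q), c; split => //; exists q.
- by move=> c [q [_ cq]]; apply: freeC; exists q.
- by move=> p; have [_ [c [[q [_ ->]] ->]]] := spanC p I; exists q, c.
- by move=> c [q cq]; apply: freeC; exists q.
Qed.

Lemma dim_ker_eq f k : dim_mod zeroS (kerS f) k -> dim_ker f = k.
Proof.
move=> dk.
have [B [<- /ker_basisP bB]] : exists B, size B = dim_ker f /\ ker_basis f B.
  apply: (epsilon_spec _ (fun d => exists B, size B = d /\ ker_basis f B)).
  by case: dk => B [_ /ker_basisP]; exists (size B), B.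
by apply/esym/(dim_mod_uniq subspace_zeroS dk); exists B.
Qed.

Lemma dim_coker_eq f c : linear f -> dim_mod (imageS f fullS) fullS c -> dim_coker f = c.
Proof.
move=> lf dc.
have [C [<- /coker_basisP bC]] : exists C, size C = dim_coker f /\ coker_basis f C.
  apply: (epsilon_spec _ (fun d => exists C, size C = d /\ coker_basis f C)).
  by case: dc => C [_ /coker_basisP]; exists (size C), C.
by apply/esym/(dim_mod_uniq (subspace_imageS lf subspace_fullS) dc); exists C.
Qed.

Lemma fredholm_ind f k c : linear f -> fredholm f k c -> ind f = k%:Z - c%:Z.
Proof. by move=> lf [dk dc]; rewrite /ind (dim_ker_eq dk) (dim_coker_eq lf dc). Qed.

Lemma fredholm_fd f k c : fredholm f k c -> fd_ker f /\ fd_coker f.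
Proof.
move=> [[B [_ /ker_basisP [fB [spanB _]]]] [C [_ /coker_basisP [spanC _]]]].
by split; [exists B | exists C].
Qed.

End Index.

Section Slabs.
Variables (K : fieldType) (n N : nat) (a : 'I_n -> op K n).
Local Notation P := (Pn K n).
Hypothesis a_lin : forall i, linear (a i).
Hypothesis a_cut : forall i j, j != i -> cutoff j N (a i).

Definition slab (i : 'I_n) : pred 'X_{1..n} :=
  [pred m : 'X_{1..n} | [forall j, (j != i) ==> (m j < N)%N]].
Definition box : pred 'X_{1..n} := [pred m : 'X_{1..n} | [forall j, (m j < N)%N]].

Lemma supported_slab i p : supported (slab i) (a i p).
Proof.
move=> m; rewrite negb_forall => /existsP [j]; rewrite negb_imply -leqNgt => /andP [ji Nmj].
by have [im_lt _] := a_cut ji; apply: im_lt; rewrite -leqNgt.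
Qed.

Lemma a_mproj_lt i j p : j != i -> a i p = a i (mproj (fun m => m j < N)%N p).
Proof.
move=> ji; rewrite {1}(mproj_split (fun m => m j < N)%N p) linD //.
have [_ ker_ge] := a_cut ji; rewrite [a i (mproj (predC _) _)]ker_ge ?addr0 //.
by move=> m; rewrite mcoeff_mproj /= -leqNgt => /negbTE ->.
Qed.

Lemma a_mproj_slab i p : a i p = a i (mproj (slab i) p).
Proof.
have a_mproj_all (js : seq 'I_n) : all (fun j => j != i) js ->
    a i p = a i (mproj [pred m : 'X_{1..n} | all (fun j => m j < N)%N js] p).
  elim: js => [|j js IH] /=; first by rewrite mproj_id.
  by case/andP => ji /IH ->; rewrite (a_mproj_lt _ ji) mprojK; congr (a i _); apply: eq_mproj.
rewrite (a_mproj_all [seq j <- enum 'I_n | j != i]); last first.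
  by rewrite all_filter; apply/allP => j _; apply/implyP.
congr (a i _); apply: eq_mproj => m /=; rewrite all_filter.
apply/allP/forallP => [slab_m j | slab_m j _]; last exact: slab_m.
by apply: slab_m; rewrite mem_enum.
Qed.

Lemma slab_cap i k m : i != k -> slab i m && slab k m = box m.
Proof.
move=> ik; apply/andP/forallP => [[/forallP si /forallP sk] j | bm].
  by have [-> | ji] := eqVneq j i; [move: (sk i); rewrite ik | move: (si j); rewrite ji].
by split; apply/forallP => j; apply/implyP.
Qed.

Lemma a_mproj_box i k p : i != k -> a i (a k p) = a i (mproj box (a k p)).
Proof.
move=> ik; rewrite a_mproj_slab -{1}(mproj_id (@supported_slab k p)) mprojK.
by congr (a i _); apply: eq_mproj => m /=; rewrite slab_cap.
Qed.

Definition box_monomials : seq 'X_{1..n} :=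
  [seq val m | m <- enum {: 'X_{1..n < (n * N).+1}}].

Lemma box_monomialsP m : box m -> m \in box_monomials.
Proof.
move=> /forallP bm; have mdeg_lt : (mdeg m < (n * N).+1)%N.
  rewrite ltnS mdegE; apply: (@leq_trans (\sum_(j < n) N)).
    by apply: leq_sum => j _; apply: ltnW.
  by rewrite sum_nat_const card_ord.
by apply/mapP; exists (BMultinom mdeg_lt); rewrite ?mem_enum.
Qed.

Lemma finite_rank_mproj_box : finite_rank (mproj (K:=K) box).
Proof.
have uniq_box : uniq box_monomials by rewrite map_inj_uniq ?enum_uniq //; apply: val_inj.
exists [seq 'X_[m] | m <- box_monomials] => q.
pose c j := let m := nth 0%MM box_monomials j in if box m then q@_m else 0.
exists c; have -> : lcomb [seq 'X_[m] | m <- box_monomials] c =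
    \sum_(m <- box_monomials) (if box m then q@_m else 0) *: 'X_[m].
  rewrite /lcomb size_map (big_nth 0%MM) big_mkord; apply: eq_bigr => j _.
  by rewrite (nth_map 0%MM).
apply/mpolyP => m; rewrite mcoeff_mproj raddf_sum /=.
under eq_bigr => m' _ do rewrite mcoeffZ mcoeffX.
have [mB | mNB] := boolP (m \in box_monomials).
  rewrite (bigD1_seq m) //= eqxx mulr1 big1 ?addr0 // => m' /negbTE m'm.
  by rewrite m'm mulr0.
rewrite big1_seq; last first.
  move=> m' /andP [_ m'B]; case: eqP => [m'm | _]; last by rewrite mulr0.
  by rewrite -m'm m'B in mNB.
by case: ifP => // /box_monomialsP; rewrite (negbTE mNB).
Qed.

End Slabs.

Section OnePlusA.
Variables (K : fieldType) (n N : nat) (a : 'I_n -> op K n).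
Local Notation P := (Pn K n).
Local Notation slab := (@slab n N).
Local Notation box := (@box n N).
Hypothesis a_lin : forall i, linear (a i).
Hypothesis a_cut : forall i j, j != i -> cutoff j N (a i).

Definition T i : op K n := opadd (@op1 K n) (a i).
Definition rest i p := \sum_(k < n | k != i) a k p.

Lemma linear_T i : linear (T i).
Proof. exact: linear_opadd. Qed.

Lemma linear_rest i : linear (rest i).
Proof.
move=> c x y; rewrite /rest scaler_sumr -big_split.
by apply: eq_bigr => k _; rewrite a_lin.
Qed.

Lemma linear_one_plus_sum : linear (one_plus_sum a).
Proof.
move=> c x y; rewrite /one_plus_sum scalerDr scaler_sumr addrACA -big_split.
by congr (_ + _); apply: eq_bigr => k _; rewrite a_lin.
Qed.

Lemma one_plus_sumE i p : one_plus_sum a p = T i p + rest i p.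
Proof. by rewrite /one_plus_sum (bigD1 i) //= addrA. Qed.

Lemma a_mproj_off_box i k p : i != k ->
  a i (mproj [pred m | slab k m && ~~ box m] p) = 0.
Proof.
move=> ik; rewrite (a_mproj_slab a_lin a_cut) mprojK mproj_pred0 ?(lin0 (a_lin i)) // => m /=.
by rewrite andbA slab_cap // andbN.
Qed.

Lemma rest_mproj_box i v : supported (slab i) v -> rest i v = rest i (mproj box v).
Proof.
move=> Sv; apply: eq_bigr => k ki; rewrite (a_mproj_slab a_lin a_cut) -{1}(mproj_id Sv) mprojK.
by congr (a k _); apply: eq_mproj => m /=; rewrite slab_cap // eq_sym.
Qed.

Lemma a_mproj_box_split k p :
  a k p = mproj box (a k p) + mproj [pred m | slab k m && ~~ box m] (a k p).
Proof.
apply/mpolyP => m; rewrite mcoeffD !mcoeff_mproj /=.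
case: (boolP (box m)) => bm; rewrite ?andbF ?andbT ?addr0 ?add0r //.
by case: ifP => // /negbT; apply: supported_slab.
Qed.

Variable G : op K n.
Hypothesis G_lin : linear G.
Hypothesis uG : forall p, one_plus_sum a (G p) = p.
Hypothesis Gu : forall p, G (one_plus_sum a p) = p.

Lemma fredholm_T i : exists k c, fredholm (T i) k c.
Proof.
apply: (fredholm_exists (linear_T i) (h1 := G \o (rest i \o mproj box))
                                     (h2 := mproj box \o (rest i \o G))).
- exact/(finite_rank_comp G_lin)/(finite_rank_comp (linear_rest i))/finite_rank_mproj_box.
- exact/finite_rank_compr/finite_rank_mproj_box.
- (* A kernel vector v = - a_i v lies in the slab of i, of which each a_k with
     k <> i only sees the part in the box. *)
  move=> v Tv0; have vE : v = - a i v by apply/eqP; rewrite -addr_eq0; apply/eqP.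
  have Sv : supported (slab i) v by rewrite vE; apply/supportedN/supported_slab.
  by rewrite /= -(rest_mproj_box Sv) -{1}(Gu v) (one_plus_sumE i) Tv0 add0r.
(* Outside the box, a_k (G p) is fixed by 1 + a_i; only its box part is missed. *)
move=> p; pose w := G p.
pose y := \sum_(k < n | k != i) mproj [pred m | slab k m && ~~ box m] (a k w).
have Ty : T i y = y.
  rewrite /T /opadd /op1 (lin_sum (a_lin i)) big1 ?addr0 // => k ki.
  by apply: a_mproj_off_box; rewrite eq_sym.
exists (w + y); rewrite (linD (linear_T i)) Ty -{1}(uG p) -/w (one_plus_sumE i).
rewrite -[RHS]addrA; congr (_ + _); rewrite /= /rest (lin_sum (linear_mproj box)) /y.
by rewrite -big_split; apply: eq_bigr => k _ /=; rewrite addrC -a_mproj_box_split.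
Qed.

Fixpoint T_prod (s : seq 'I_n) : op K n :=
  if s is i :: s' then opmul (T i) (T_prod s') else @op1 K n.

Lemma linear_T_prod s : linear (T_prod s).
Proof. by elim: s => [|i s IH] //=; apply: linear_opmul (linear_T i) IH. Qed.

Lemma finite_rank_T_prod_sub s : uniq s ->
  finite_rank (fun p => T_prod s p - (p + \sum_(k <- s) a k p)).
Proof.
elim: s => [_ | i s IH /andP [i_notin_s /IH D_fin]] /=.
  by exists [::] => p; exists (fun=> 0); rewrite big_nil addr0 /op1 subrr lcomb_nil.
pose D p := T_prod s p - (p + \sum_(k <- s) a k p).
apply: (eq_finite_rank
  (f := fun p => D p + (a i (D p) + \sum_(k <- s | k \in s) a i (a k p)))).
  move=> p; rewrite -big_seq /D (linB (a_lin i)) (linD (a_lin i)) (lin_sum (a_lin i)).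
  by rewrite /opmul /T /opadd /op1 big_cons; ring.
apply: finite_rankD D_fin (finite_rankD (finite_rank_comp (a_lin i) D_fin) _).
apply: finite_rank_sum => k ks; have ik : i != k by apply: contraNneq i_notin_s => ->.
apply: (eq_finite_rank (f := a i \o (mproj box \o a k))).
  by move=> p; rewrite /= -a_mproj_box.
exact/(finite_rank_comp (a_lin i))/finite_rank_compr/finite_rank_mproj_box.
Qed.

Lemma fredholm_T_prod s : exists k c, fredholm (T_prod s) k c /\
  k%:Z - c%:Z = \sum_(i <- s) ind (T i).
Proof.
elim: s => [|i s [k [c [dkc E]]]] /=.
  by exists 0%N, 0%N; rewrite big_nil; split => //; apply: (fredholm_bij (g := @op1 K n)).
have [ki [ci dTi]] := fredholm_T i.
have [k' [c' [dkc' E']]] := fredholm_comp (linear_T i) (linear_T_prod s) dTi dkc.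
by exists k', c'; split => //; rewrite E' E big_cons (fredholm_ind (linear_T i) dTi).
Qed.

Lemma sum_ind_T : \sum_(i < n) ind (T i) = 0.
Proof.
have [k [c [dkc]]] := fredholm_T_prod (enum 'I_n); rewrite big_enum => <-.
have ufred := fredholm_bij linear_one_plus_sum Gu uG.
apply: (fredholm_perturb (linear_T_prod _) linear_one_plus_sum _ dkc ufred).
apply: eq_finite_rank (finite_rank_T_prod_sub (enum_uniq _)) => p.
by rewrite /one_plus_sum big_enum.
Qed.

End OnePlusA.

Section Uniqueness.
Variables (K : fieldType) (n N : nat) (a a' : 'I_n -> op K n).
Local Notation box := (@box n N).
Hypotheses (a_lin : forall i, linear (a i)) (a'_lin : forall i, linear (a' i)).
Hypotheses (a_cut : forall i j, j != i -> cutoff j N (a i))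
           (a'_cut : forall i j, j != i -> cutoff j N (a' i)).
Hypothesis u_eq : forall p, one_plus_sum a p = one_plus_sum a' p.

Lemma supported_box_sub i p : supported box (a i p - a' i p).
Proof.
have sum_eq : \sum_(k < n) a k p = \sum_(k < n) a' k p by apply/(addrI p)/u_eq.
move=> m bm; have [sm | /negbTE sm] := boolP (slab N i m); last first.
  by rewrite mcoeffB !(supported_slab a_cut, supported_slab a'_cut) ?sm // subrr.
have -> : a i p - a' i p = \sum_(k < n | k != i) (a' k p - a k p).
  have := sum_eq; rewrite (bigD1 i) //= => /esym; rewrite (bigD1 i) //= => /esym sumE.
  have -> : a i p = a' i p + \sum_(k < n | k != i) a' k p - \sum_(k < n | k != i) a k p.
    by rewrite -sumE addrK.
  by rewrite sumrB; ring.
rewrite raddf_sum big1 //= => k ki; have /negbTE skm : ~~ slab N k m.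
  by apply: contra bm => skm; rewrite -(slab_cap _ _ ki) skm sm.
by rewrite mcoeffB !(supported_slab a_cut, supported_slab a'_cut) ?skm // subrr.
Qed.

Lemma finite_rank_T_sub i : finite_rank (fun p => T a i p - T a' i p).
Proof.
apply: (eq_finite_rank (f := mproj box \o (fun p => a i p - a' i p))).
  move=> p; rewrite /= mproj_id; last exact: supported_box_sub.
  by rewrite /T /opadd /op1 opprD addrACA subrr add0r.
exact/finite_rank_compr/finite_rank_mproj_box.
Qed.

Lemma ind_T_eq G i : linear G -> cancel (one_plus_sum a) G ->
  cancel G (one_plus_sum a) -> ind (T a i) = ind (T a' i).
Proof.
move=> lG Gu uG.
have [k [c dT]] := fredholm_T a_lin a_cut lG uG Gu i.
have [k' [c' dT']] : exists k' c', fredholm (T a' i) k' c'.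
  by apply: (fredholm_T a'_lin a'_cut lG) => p; rewrite -u_eq.
rewrite (fredholm_ind (linear_T a_lin i) dT) (fredholm_ind (linear_T a'_lin i) dT').
exact: fredholm_perturb (linear_T a_lin i) (linear_T a'_lin i) (finite_rank_T_sub i) dT dT'.
Qed.

End Uniqueness.

Lemma exists_neq_ord n (i : 'I_n) : (2 <= n)%N -> exists j : 'I_n, j != i.
Proof.
move=> n_ge2; have n_gt0 : (0 < n)%N by apply: ltnW.
have [-> | i_neq0] := eqVneq i (Ordinal n_gt0); first by exists (Ordinal n_ge2).
by exists (Ordinal n_gt0); rewrite eq_sym.
Qed.

Lemma inpC_linear K n (i : 'I_n) (b : op K n) : (2 <= n)%N -> inpC i b -> linear b.
Proof.
by move=> n_ge2 bi; have [j ji] := exists_neq_ord i n_ge2; apply: linear_inp (bi j ji).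
Qed.

Lemma inpC_cutoff K n (b : 'I_n -> op K n) : (forall i, inpC i (b i)) ->
  exists N, forall i j, j != i -> cutoff j N (b i).
Proof.
move=> b_in; have [Nf NfP] : exists Nf : 'I_n * 'I_n -> nat,
    forall x, x.2 != x.1 -> cutoff x.2 (Nf x) (b x.1).
  apply: (choice (fun x N => x.2 != x.1 -> cutoff x.2 N (b x.1))) => -[i j] /=.
  case: (boolP (j != i)) => [ji | _]; last by exists 0%N.
  by have [N cN] := inp_cutoff (b_in i j ji); exists N.
by exists (\max_x Nf x) => i j ji; apply: cutoff_mono (NfP (i, j) ji); apply: leq_bigmax.
Qed.

Theorem lemma3p6 (K : fieldType) (n : nat) (a : 'I_n -> op K n) :
  [pchar K] =i pred0 ->
  (2 <= n)%N ->
  (forall i, inpC i (a i)) ->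
  unitS (one_plus_sum a) ->
  ((forall i, fd_ker (opadd (@op1 K n) (a i)) /\ fd_coker (opadd (@op1 K n) (a i))) /\
   \sum_(i < n) ind (opadd (@op1 K n) (a i)) = 0) /\
  (forall a' : 'I_n -> op K n,
     (forall i, inpC i (a' i)) ->
     (forall p, one_plus_sum a p = one_plus_sum a' p) ->
     forall i, ind (opadd (@op1 K n) (a i)) = ind (opadd (@op1 K n) (a' i))).
Proof.
move=> _ n_ge2 a_in [_ [G [G_in [uG Gu]]]].
have G_lin := linear_inS G_in.
have a_lin i := inpC_linear n_ge2 (a_in i).
have [N a_cut] := inpC_cutoff a_in.
split; first split.
- by move=> i; have [k [c /fredholm_fd]] := fredholm_T a_lin a_cut G_lin uG Gu i.
- by have := sum_ind_T a_lin a_cut G_lin uG Gu.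
move=> a' a'_in u_eq i; have [N' a'_cut] := inpC_cutoff a'_in.
have a'_lin i := inpC_linear n_ge2 (a'_in i).
apply: (ind_T_eq (N := maxn N N') a_lin a'_lin _ _ u_eq i G_lin Gu uG).
  by move=> i' j ji; apply: cutoff_mono (a_cut i' j ji); apply: leq_maxl.
by move=> i' j ji; apply: cutoff_mono (a'_cut i' j ji); apply: leq_maxr.
Qed.
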